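(* Let $A$ be a finite multiset of $n$ points in $\mathbb{R}^d$ with mean $\mu$, let $\varepsilon,\delta\in(0,1)$, $b>0$, $k=b\log\delta^{-1}$ and $r=\frac{1}{11}\sqrt{\frac{\varepsilon\,\mathrm{Opt}}{n}}$. Let $P=\{\hat\mu_1,\dots,\hat\mu_k\}\subset\mathbb{R}^d$ be points such that at least $\frac{7}{10}b\log\delta^{-1}$ indices $i$ satisfy $\|\hat\mu_i-\mu\|\le r$. If, at iteration $j$, Algorithm $\textsc{FastGD}(P)$ has a point $c_j$ with $\|c_j-\mu\|\le10r$, then $\|c_{j+1}-\mu\|\le11r$.
   Context: $\mu=\frac1n\sum_{p\in A}p$, $\mathrm{Opt}=\sum_{p\in A}\|p-\mu\|^2$. For $q\in\mathbb{R}^d$, $\nabla(q)=\sum_{i:\hat\mu_i\neq q}\frac{q-\hat\mu_i}{\|q-\hat\mu_i\|}$. Algorithm $\textsc{FastGD}(P)$: $c_0$ is the coordinate-wise median of $P$; for $j\ge1$, given $c_{j-1}$ compute $g=\nabla(c_{j-1})$, orthogonally project all points of $P$ onto the line $\{c_{j-1}-tg:t\in\mathbb{R}\}$, and let $c_j$ be a median of the projected points along this line. *)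

From mathcomp Require Import all_boot all_order all_algebra.
From mathcomp Require Import reals exp.
Set Implicit Arguments. Unset Strict Implicit. Unset Printing Implicit Defensive.
Import Order.TTheory GRing.Theory Num.Theory.
Local Open Scope ring_scope.

Section Defs.
Variables (R : realType) (d : nat).
Local Notation pt := 'rV[R]_d.

Definition dotv (u v : pt) : R := \sum_(i < d) u 0 i * v 0 i.
Definition enorm (v : pt) : R := Num.sqrt (dotv v v).

Definition mean (A : seq pt) : pt := (size A)%:R^-1 *: \sum_(p <- A) p.

Definition Opt (A : seq pt) : R := \sum_(p <- A) enorm (p - mean A) ^+ 2.

Definition grad (P : seq pt) (q : pt) : pt :=
  \sum_(p <- P | p != q) (enorm (q - p))^-1 *: (q - p).

Definition is_median (s : seq R) (m : R) : Prop :=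
  let lo := count (fun x : R => x <= m) s in
  let hi := count (fun x : R => m <= x) s in
  (size s <= 2 * lo)%N /\ (size s <= 2 * hi)%N.

Definition coord_median (P : seq pt) (c0 : pt) : Prop :=
  forall i : 'I_d, is_median [seq (p : pt) 0 i | p <- P] (c0 0 i).

(* One step of FastGD: g = grad(c); project P orthogonally onto the line
   {c - t g : t in R}; c' is a median of the projected points along this
   line.  For g <> 0 the orthogonal projection of p is c - t_p g with
   t_p = - <p - c, g> / ||g||^2, and a median along the line is c - t g
   with t a median of the parameters t_p.  For g = 0 the line degenerates
   to the point c, onto which every point projects, so c' = c. *)
Definition fastgd_step (P : seq pt) (c c' : pt) : Prop :=
  let g := grad P c in
  if g == 0 then c' = c
  else exists t : R,
    is_median [seq - (dotv (p - c) g / dotv g g) | p <- P] t /\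
    c' = c - t *: g.

Definition fastgd_run (P : seq pt) (c : nat -> pt) : Prop :=
  coord_median P (c 0%N) /\ forall j, fastgd_step P (c j) (c j.+1).

End Defs.

(* Since 7/10 > 1/2, a strict majority of the points of P are good, i.e.
   within r of mu.  Parametrize the search line as c - t g; the parameter of
   the orthogonal projection of a point p differs from that of mu by
   -<p - mu, g>/|g|^2, which by Cauchy-Schwarz is at most r/|g| in absolute
   value when p is good.  A median parameter t is bounded on both sides by
   parameters of good points, so it also lies within r/|g| of the parameter
   t_mu of mu.  By Pythagoras,
   |c - t g - mu|^2 = |(c - mu) - proj|^2 + (t - t_mu)^2 |g|^2
                   <= |c - mu|^2 + r^2 <= 100 r^2 + r^2 <= (11 r)^2. *)
From mathcomp Require Import all_boot all_order all_algebra.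
From mathcomp Require Import reals exp.
From mathcomp Require Import ring lra zify.
Set Implicit Arguments. Unset Strict Implicit. Unset Printing Implicit Defensive.
Import Order.TTheory GRing.Theory Num.Theory.
Local Open Scope ring_scope.

Section InnerProduct.
Variables (R : realType) (d : nat).
Local Notation pt := 'rV[R]_d.
Implicit Types (u v w g : pt).

Lemma dotvC u v : dotv u v = dotv v u.
Proof. by apply: eq_bigr => i _; rewrite mulrC. Qed.

Lemma dotvBl u v w : dotv (u - v) w = dotv u w - dotv v w.
Proof. by rewrite /dotv -sumrB; apply: eq_bigr => i _; rewrite !mxE mulrBl. Qed.

Lemma dotvZl a u w : dotv (a *: u) w = a * dotv u w.
Proof. by rewrite /dotv mulr_sumr; apply: eq_bigr => i _; rewrite !mxE mulrA. Qed.

Lemma dotvBr u v w : dotv w (u - v) = dotv w u - dotv w v.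
Proof. by rewrite dotvC dotvBl !(dotvC w). Qed.

Lemma dotvZr a u w : dotv w (a *: u) = a * dotv w u.
Proof. by rewrite dotvC dotvZl dotvC. Qed.

Lemma dotv0r u : dotv u 0 = 0.
Proof. by rewrite -(scale0r (0 : pt)) dotvZr mul0r. Qed.

Lemma dotv_ge0 u : 0 <= dotv u u.
Proof. by apply: sumr_ge0 => i _; rewrite -expr2 sqr_ge0. Qed.

Lemma dotv_eq0 u : dotv u u = 0 -> u = 0.
Proof.
move=> u0; apply/matrixP => i k; rewrite mxE (ord1 i).
have sq_ge0 (l : 'I_d) : true -> 0 <= u 0 l * u 0 l by rewrite -expr2 sqr_ge0.
by move: (psumr_eq0P sq_ge0 u0 (i := k) isT) => /eqP; rewrite mulf_eq0 orbb => /eqP.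
Qed.

Lemma enorm_le v a : 0 <= a -> (enorm v <= a) = (dotv v v <= a ^+ 2).
Proof.
by move=> a0; rewrite -[a in LHS]ger0_norm // -sqrtr_sqr ler_sqrt // sqr_ge0.
Qed.

(* Completing the square in s: the minimum is attained at the parameter of
   the orthogonal projection of w onto the line spanned by g. *)
Lemma dotv_subZ w g s : dotv g g != 0 ->
  dotv (w - s *: g) (w - s *: g) =
  dotv w w - dotv w g ^+ 2 / dotv g g + (s - dotv w g / dotv g g) ^+ 2 * dotv g g.
Proof. by move=> g0; rewrite !dotvBl !dotvBr !dotvZl !dotvZr (dotvC g w); field. Qed.

Lemma dotv_CauchySchwarz u v : dotv u v ^+ 2 <= dotv u u * dotv v v.
Proof.
have [/dotv_eq0 -> | v0] := eqVneq (dotv v v) 0.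
  by rewrite dotv0r expr0n /= mulr_ge0 ?dotv_ge0.
have vpos : 0 < dotv v v by rewrite lt_def v0 dotv_ge0.
have := dotv_ge0 (u - (dotv u v / dotv v v) *: v).
by rewrite dotv_subZ // subrr expr0n mul0r addr0 subr_ge0 ler_pdivrMr.
Qed.

Lemma normr_dotv_le u v : `|dotv u v| <= enorm u * enorm v.
Proof.
rewrite -sqrtr_sqr /enorm -sqrtrM ?dotv_ge0 // ler_sqrt ?mulr_ge0 ?dotv_ge0 //.
exact: dotv_CauchySchwarz.
Qed.

(* c - (line_param c g p) g is the orthogonal projection of p onto the line
   through c spanned by g; this is the parametrization used by [fastgd_step]. *)
Definition line_param c g p : R := - (dotv (p - c) g / dotv g g).

Lemma line_param_dist c g p q :
  `|line_param c g p - line_param c g q| <= enorm (p - q) / enorm g.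
Proof.
have [/dotv_eq0 -> | g0] := eqVneq (dotv g g) 0.
  (* for g = 0 both sides vanish, since x / 0 = 0 *)
  by rewrite /line_param !dotv0r !mul0r subrr normr0 /enorm dotv0r sqrtr0 invr0 mulr0.
have ng_pos : 0 < enorm g by rewrite sqrtr_gt0 lt_def g0 dotv_ge0.
have -> : line_param c g p - line_param c g q = - (dotv (p - q) g / dotv g g).
  rewrite /line_param (_ : p - q = (p - c) - (q - c)) ?dotvBl; first by field.
  by rewrite opprB addrA subrK.
rewrite normrN normrM normfV (ger0_norm (dotv_ge0 g)) -(sqr_sqrtr (dotv_ge0 g)) -/(enorm g).
apply: le_trans (_ : _ <= enorm (p - q) * enorm g / enorm g ^+ 2) _.
  by rewrite ler_wpM2r ?invr_ge0 ?sqr_ge0 ?normr_dotv_le.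
by rewrite expr2 invfM mulrA mulfK ?gt_eqF.
Qed.

End InnerProduct.

Lemma has_predI_count (T : Type) (a b : pred T) (s : seq T) :
  (size s < count a s + count b s)%N -> has (predI a b) s.
Proof.
rewrite -count_predUI has_count => lt_s.
by have := count_size (predU a b) s; lia.
Qed.

Lemma median_near (R : realType) (s : seq R) (m a e : R) :
  (size s < 2 * count (fun x : R => `|x - a| <= e)%R s)%N ->
  is_median s m -> `|m - a| <= e.
Proof.
set near := fun x : R => _; move=> many_near [lo hi].
have meet (b : pred R) : (size s <= 2 * count b s)%N -> exists2 x, near x & b x.
  move=> half_b; have /hasP[x _ /andP[xa bx]] : has (predI near b) s.
    by apply: has_predI_count; lia.
  by exists x.
have [x + xm] := meet _ lo; have [y + my] := meet _ hi.
rewrite /= in xm my; rewrite /near !ler_distl => /andP[? ?] /andP[? ?].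
by apply/andP; split; lra.
Qed.

Lemma fastgd_step_nil (R : realType) (d : nat) (c c' : 'rV[R]_d) :
  fastgd_step [::] c c' -> c' = c.
Proof. by rewrite /fastgd_step /grad big_nil eqxx. Qed.

Lemma fastgd_step_sqr_dist (R : realType) (d : nat) (P : seq 'rV[R]_d)
    (c c' mu : 'rV[R]_d) (r : R) :
  (size P < 2 * count (fun p => enorm (p - mu) <= r)%R P)%N ->
  fastgd_step P c c' ->
  dotv (c' - mu) (c' - mu) <= dotv (c - mu) (c - mu) + r ^+ 2.
Proof.
move=> majority; rewrite /fastgd_step; set g := grad P c.
case: eqP => [_ -> | /eqP g0]; first by rewrite lerDl sqr_ge0.
move=> [t [median ->]]; set G := dotv g g.
have Gpos : 0 < G by rewrite lt_def dotv_ge0 andbT; apply: contra_neq g0 => /dotv_eq0.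
have ng_pos : 0 < enorm g by rewrite sqrtr_gt0.
have ngG : enorm g ^+ 2 = G by rewrite sqr_sqrtr // dotv_ge0.
set w := c - mu.
have t_mu : dotv w g / G = line_param c g mu.
  by rewrite /line_param /w !dotvBl -mulNr opprB.
have t_near : `|t - dotv w g / G| <= r / enorm g.
  rewrite t_mu; apply: median_near median; rewrite size_map count_map.
  apply: (leq_trans majority); rewrite leq_mul2l sub_count ?orbT // => p /= pr.
  by apply: le_trans (line_param_dist c g p mu) _; rewrite ler_pM2r ?invr_gt0.
rewrite (_ : c - t *: g - mu = w - t *: g); last by rewrite addrAC.
rewrite dotv_subZ -/G ?gt_eqF //.
have : (t - dotv w g / G) ^+ 2 * G <= r ^+ 2.
  set x := t - _ in t_near *; have rg0 := le_trans (normr_ge0 x) t_near.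
  rewrite -(real_normK (num_real x)) -ler_pdivlMr // -ngG -expr_div_n.
  by rewrite ler_pXn2r ?nnegrE ?normr_ge0.
have : 0 <= dotv w g ^+ 2 / G by rewrite divr_ge0 ?sqr_ge0 ?ltW.
lra.
Qed.

Theorem lemma3p4 (R : realType) (d n : nat) (A : seq 'rV[R]_d)
  (eps delta b : R) (P : seq 'rV[R]_d) (c : nat -> 'rV[R]_d) (j : nat) :
  size A = n -> (0 < n)%N ->
  0 < eps < 1 -> 0 < delta < 1 -> 0 < b ->
  (size P)%:R = b * ln delta^-1 ->
  let mu := mean A in
  let r := 11^-1 * Num.sqrt (eps * Opt A / n%:R) in
  7 / 10 * (b * ln delta^-1) <= (count (fun p => enorm (p - mu) <= r) P)%:R ->
  fastgd_run P c ->
  enorm (c j - mu) <= 10 * r ->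
  enorm (c j.+1 - mu) <= 11 * r.
Proof.
move=> _ _ _ _ _ sizeP mu r; rewrite -sizeP => many_good [_ step] cj_near.
have r0 : 0 <= r by rewrite mulr_ge0 ?invr_ge0 ?sqrtr_ge0.
clearbody r.
have [/size0nil P0 | Pn0] := posnP (size P).
  by move: (step j); rewrite P0 => /fastgd_step_nil ->; apply: le_trans cj_near _; lra.
have majority : (size P < 2 * count (fun p => enorm (p - mu) <= r)%R P)%N.
  rewrite -(ltr_nat R) natrM.
  have : 0 < (size P)%:R :> R by rewrite ltr0n.
  lra.
have := fastgd_step_sqr_dist majority (step j).
have : (10 * r) ^+ 2 + r ^+ 2 <= (11 * r) ^+ 2 by rewrite !expr2; have := mulr_ge0 r0 r0; lra.
by move: cj_near; rewrite !enorm_le ?mulr_ge0 //; lra.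
Qed.
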